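(* Let $3\le a<b$ be integers and for $z\in(0,1)$ let $g(z,a,b)=f(z)(b-1)(a-1)+\frac{1}{1-z}+2-b-a$. Then: (i) as a function of $z\in(0,1)$, $g$ is strictly decreasing, attains a global minimum, and is strictly increasing afterwards; the global minimum point is the only point where $\partial g/\partial z=0$; (ii) $g(z)>0$ for all $z\in(0,z_l]$; (iii) $g(z)>0$ for all $z\in[z_r,1)$; (iv) if $\min_{z} g(z)<0$, then $g$ has exactly two roots $z_1<z_2$ in $(0,1)$, and $z_1,z_2\in(z_l,z_r)$; (v) for every $z\in(z_l,1)$, $g(z,a,b)>g(z,a,b+1)$; (vi) for each fixed $a\ge3$ there is a threshold $b'\ge a+1$ such that $\min_z g(z,a,b)\ge 0$ for all $b$ with $a<b<b'$, and $\min_z g(z,a,b)<0$ for all $b\ge b'$.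
   Context: $f(z)=\frac{-\ln(1-z)(1-z)}{z}$ for $z\in(0,1)$ (a strictly decreasing bijection onto $(0,1)$). $z_l$ is the unique $z\in(0,1)$ with $f(z)=\frac1{a-1}$, and $z_r$ the unique $z\in(0,1)$ with $f(z)=\frac1{b-1}$ (these depend on $a$, resp. $b$). *)

From Stdlib Require Import Reals Lra.
Open Scope R_scope.

Definition fz (z : R) : R := - ln (1 - z) * (1 - z) / z.

Definition gz (z a b : R) : R :=
  fz z * (b - 1) * (a - 1) + 1 / (1 - z) + 2 - b - a.

From Stdlib Require Import Reals Lra Psatz Lia Wf_nat Classical.
From Coquelicot Require Import Coquelicot.
Local Open Scope R_scope.

(* Write L(z) = -ln(1-z), so that f(z) = L(z)(1-z)/z and, with A = a-1 and
   B = b-1,  g(z) = A B f(z) + 1/(1-z) - A - B.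
   Everything rests on the two elementary bounds  z + z^2/2 < L(z) < z/(1-z)
   on (0,1), obtained from the mean value theorem.  They give:
   - f > 0 and f is strictly decreasing;  X^2 f(z) - 2X + 1/(1-z) > 0 for every
     real X; hence g > 0 wherever A f >= 1 (i.e. z <= z_l) or B f <= 1
     (i.e. z >= z_r), which is (ii) and (iii);
   - g(z,a,b+1) - g(z,a,b) = A f(z) - 1, which is negative beyond z_l: (v);
   - g'(z) = (1 - A B S(z))/(1-z)^2 with S(z) = (L(z)-z)(1-z)^2/z^2 strictly
     decreasing from 1/2 to 0, so g' changes sign exactly once: (i).
   Two general facts about real functions then finish the proof: a function
   whose derivative changes sign once is a "valley" with a unique critical
   point, and a continuous valley that is negative somewhere but positive near
   both ends has exactly two roots (iv).  Finally, negativity of min g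
   persists from b to b+1 and holds for large b, so the least such b is the
   threshold of (vi). *)

Definition Lz (z : R) : R := - ln (1 - z).

Ltac derive_on_unit_interval :=
  cbv beta; apply is_derive_Reals; auto_derive; [repeat split; try lra; nra | ];
  unfold Rminus; field; repeat split; lra.

Lemma strictly_increasing_of_pos_derive (h h' : R -> R) x y : x < y ->
  (forall c, x <= c <= y -> derivable_pt_lim h c (h' c)) ->
  (forall c, x < c < y -> 0 < h' c) -> h x < h y.
Proof.
  intros Hxy Hd Hpos. destruct (MVT_cor2 h h' x y Hxy Hd) as [c [Hc Hin]].
  specialize (Hpos c Hin). nra.
Qed.

Lemma strictly_decreasing_of_neg_derive (h h' : R -> R) x y : x < y ->
  (forall c, x <= c <= y -> derivable_pt_lim h c (h' c)) ->
  (forall c, x < c < y -> h' c < 0) -> h y < h x.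
Proof.
  intros Hxy Hd Hneg. destruct (MVT_cor2 h h' x y Hxy Hd) as [c [Hc Hin]].
  specialize (Hneg c Hin). nra.
Qed.

Lemma Lz_0 : Lz 0 = 0.
Proof. unfold Lz. rewrite Rminus_0_r, ln_1. ring. Qed.

(* Lower bound L(z) > z + z^2/2: the difference has derivative z^2/(1-z) > 0. *)
Lemma Lz_lower z : 0 < z < 1 -> z + z^2/2 < Lz z.
Proof.
  intros Hz.
  assert (Hmono : (fun t => Lz t - t - t^2/2) 0 < (fun t => Lz t - t - t^2/2) z).
  { apply (strictly_increasing_of_pos_derive (fun t => Lz t - t - t^2/2)
      (fun c => 1/(1-c) - 1 - c)); [lra| |].
    - intros c Hc. unfold Lz. derive_on_unit_interval.
    - intros c Hc. assert (1/(1-c) * (1-c) = 1) by (field; lra). nra. }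
  cbv beta in Hmono. rewrite Lz_0 in Hmono. lra.
Qed.

(* Upper bound L(z) < z/(1-z): the difference has derivative z/(1-z)^2 > 0. *)
Lemma Lz_upper z : 0 < z < 1 -> Lz z * (1 - z) < z.
Proof.
  intros Hz.
  assert (Hmono : (fun t => t/(1-t) - Lz t) 0 < (fun t => t/(1-t) - Lz t) z).
  { apply (strictly_increasing_of_pos_derive (fun t => t/(1-t) - Lz t)
      (fun c => 1/(1-c)^2 - 1/(1-c))); [lra| |].
    - intros c Hc. unfold Lz. derive_on_unit_interval.
    - intros c Hc. assert (1/(1-c) * (1-c) = 1) by (field; lra).
      replace (1/(1-c)^2) with ((1/(1-c)) * (1/(1-c))) by (field; lra). nra. }
  cbv beta in Hmono. rewrite Lz_0 in Hmono.
  assert (z/(1-z) * (1-z) = z) by (field; lra). nra.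
Qed.

Lemma fz_Lz z : fz z = Lz z * (1 - z) / z.
Proof. reflexivity. Qed.

Lemma fz_pos z : 0 < z < 1 -> 0 < fz z.
Proof.
  intros Hz. rewrite fz_Lz. pose proof (Lz_lower z Hz).
  apply Rdiv_lt_0_compat; nra.
Qed.

Lemma fz_decreasing x y : 0 < x -> x < y -> y < 1 -> fz y < fz x.
Proof.
  intros Hx Hxy Hy.
  apply (strictly_decreasing_of_neg_derive fz (fun z => (z - Lz z)/z^2)); [lra| |].
  - intros c Hc. unfold fz, Lz. derive_on_unit_interval.
  - intros c Hc. pose proof (Lz_lower c ltac:(lra)).
    apply Rdiv_neg_pos; [nra | apply pow_lt; lra].
Qed.

Lemma fz_nonincreasing x y : 0 < x -> x <= y -> y < 1 -> fz y <= fz x.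
Proof.
  intros Hx Hxy Hy. destruct (Req_dec x y) as [->|Hne]; [lra|].
  left. apply fz_decreasing; lra.
Qed.

(* The quadratic X^2 f(z) - 2X + 1/(1-z) has no real root, because
   f(z) / (1-z) = L(z)/z > 1; this is the heart of (ii) and (iii). *)
Lemma quadratic_pos z X : 0 < z < 1 -> 0 < X^2 * fz z - 2 * X + 1/(1-z).
Proof.
  intros Hz. pose proof (fz_pos z Hz). pose proof (Lz_lower z Hz).
  assert (E : fz z * (1/(1-z)) * z = Lz z) by (rewrite fz_Lz; field; lra).
  assert (fz z * (1/(1-z)) > 1) by nra.
  assert (0 <= (fz z * X - 1)^2) by apply pow2_ge_0.
  nra.
Qed.

(* g > 0 wherever (a-1) f(z) >= 1: write g = B (A f - 1) - A + 1/(1-z), B >= A. *)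
Lemma gz_pos_left z a b : 1 < a <= b -> 0 < z < 1 -> (a - 1) * fz z >= 1 ->
  gz z a b > 0.
Proof.
  intros Hab Hz Hf. pose proof (quadratic_pos z (a-1) Hz). unfold gz. nra.
Qed.

(* g > 0 wherever (b-1) f(z) <= 1: write g = A (B f - 1) - B + 1/(1-z), A <= B. *)
Lemma gz_pos_right z a b : 1 < a <= b -> 0 < z < 1 -> (b - 1) * fz z <= 1 ->
  gz z a b > 0.
Proof.
  intros Hab Hz Hf. pose proof (quadratic_pos z (b-1) Hz).
  pose proof (fz_pos z Hz). unfold gz. nra.
Qed.

Lemma gz_step_b z a b : gz z a (b + 1) = gz z a b + ((a - 1) * fz z - 1).
Proof. unfold gz. ring. Qed.

(* Once g(z,a,b) < 0 it stays negative for b+1: by gz_pos_left the slope is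
   then negative. *)
Lemma gz_neg_persists z a b : 1 < a <= b -> 0 < z < 1 -> gz z a b < 0 ->
  gz z a (b + 1) < 0.
Proof.
  intros Hab Hz Hg. rewrite gz_step_b.
  destruct (Rlt_le_dec ((a - 1) * fz z) 1) as [Hf|Hf]; [lra|].
  pose proof (gz_pos_left z a b Hab Hz ltac:(lra)). lra.
Qed.

Lemma gz_eventually_negative z a : 0 < z < 1 -> (a - 1) * fz z < 1 ->
  exists n : nat, a < INR n /\ gz z a (INR n) < 0.
Proof.
  intros Hz Hf. set (s := (a - 1) * fz z) in Hf |- *. set (c := 1 / (1 - z)).
  set (q := (c + 1 - a) / (1 - s)).
  assert (Eq : q * (1 - s) = c + 1 - a) by (unfold q; field; lra).
  destruct (INR_unbounded (Rabs q + 1 + Rabs a)) as [n Hn].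
  pose proof (Rle_abs q). pose proof (Rabs_pos q).
  pose proof (Rle_abs a). pose proof (Rabs_pos a).
  exists n. split; [lra|].
  replace (gz z a (INR n)) with ((INR n - 1) * (s - 1) + c + 1 - a)
    by (unfold gz, s, c; ring).
  assert (0 < (INR n - 1 - q) * (1 - s)) by (apply Rmult_lt_0_compat; lra).
  nra.
Qed.

(* S(z) = (L(z) - z)(1-z)^2/z^2, in terms of which
   g'(z) = (1 - (a-1)(b-1) S(z)) / (1-z)^2. *)
Definition Sz (z : R) : R := (Lz z - z) * (1 - z)^2 / z^2.

Lemma Sz_derive z : 0 < z < 1 ->
  derivable_pt_lim Sz z ((1 - z) * (z^2 - 2 * (Lz z - z)) / z^3).
Proof. intros Hz. unfold Sz, Lz. derive_on_unit_interval. Qed.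

Lemma Sz_continuous z : 0 < z < 1 -> continuity_pt Sz z.
Proof. intros Hz. apply derivable_continuous_pt. eexists. apply Sz_derive, Hz. Qed.

Lemma Sz_decreasing x y : 0 < x -> x < y -> y < 1 -> Sz y < Sz x.
Proof.
  intros Hx Hxy Hy. apply (strictly_decreasing_of_neg_derive Sz
    (fun z => (1 - z) * (z^2 - 2 * (Lz z - z)) / z^3)); [lra| |].
  - intros c Hc. apply Sz_derive. lra.
  - intros c Hc. pose proof (Lz_lower c ltac:(lra)).
    apply Rdiv_neg_pos; [nra | apply pow_lt; lra].
Qed.

Lemma Sz_bounds z : 0 < z < 1 -> (1 - z)^2 / 2 < Sz z < 1 - z.
Proof.
  intros Hz. pose proof (Lz_lower z Hz). pose proof (Lz_upper z Hz).
  assert (Hz2 : 0 < z^2) by (apply pow_lt; lra).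
  assert (E : Sz z * z^2 = (Lz z - z) * (1 - z)^2) by (unfold Sz; field; lra).
  split.
  - assert ((Lz z - z) * (1 - z)^2 > z^2 / 2 * (1 - z)^2)
      by (apply Rmult_gt_compat_r; nra).
    nra.
  - assert ((Lz z - z) * (1 - z)^2 < z^2 * (1 - z)) by nra.
    nra.
Qed.

Lemma Sz_attains c : 0 < c < 1/4 -> exists z, 0 < z < 1 /\ Sz z = c.
Proof.
  intros Hc.
  destruct (Ranalysis5.IVT_interv (fun t => c - Sz t) (1/4) (1 - c))
    as [z [Hz Heq]].
  - intros t Ht. apply continuity_pt_minus; [apply continuity_pt_const; now intros ? ?|].
    apply Sz_continuous. lra.
  - lra.
  - pose proof (Sz_bounds (1/4) ltac:(lra)). lra.
  - pose proof (Sz_bounds (1 - c) ltac:(lra)). lra.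
  - exists z. split; [lra|]. simpl in Heq. lra.
Qed.

Lemma gz_derive a b z : 0 < z < 1 ->
  derivable_pt_lim (fun t => gz t a b) z ((1 - (a-1) * (b-1) * Sz z) / (1 - z)^2).
Proof. intros Hz. unfold gz, fz, Sz, Lz. derive_on_unit_interval. Qed.

Lemma gz_continuous a b z : 0 < z < 1 -> continuity_pt (fun t => gz t a b) z.
Proof. intros Hz. apply derivable_continuous_pt. eexists. apply gz_derive, Hz. Qed.

Lemma valley_of_derivative_sign (h h' : R -> R) l u m : l < m < u ->
  (forall z, l < z < u -> derivable_pt_lim h z (h' z)) ->
  (forall z, l < z < m -> h' z < 0) -> h' m = 0 ->
  (forall z, m < z < u -> 0 < h' z) ->
  (forall x y, l < x -> x < y -> y <= m -> h y < h x) /\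
  (forall x y, m <= x -> x < y -> y < u -> h x < h y) /\
  (forall z, l < z < u -> h m <= h z) /\
  (forall z, l < z < u -> (derivable_pt_lim h z 0 <-> z = m)).
Proof.
  intros Hm Hd Hneg Hzero Hpos.
  assert (Hdec : forall x y, l < x -> x < y -> y <= m -> h y < h x).
  { intros x y Hx Hxy Hy. apply (strictly_decreasing_of_neg_derive h h'); [lra| |].
    - intros c Hc. apply Hd. lra.
    - intros c Hc. apply Hneg. lra. }
  assert (Hinc : forall x y, m <= x -> x < y -> y < u -> h x < h y).
  { intros x y Hx Hxy Hy. apply (strictly_increasing_of_pos_derive h h'); [lra| |].
    - intros c Hc. apply Hd. lra.
    - intros c Hc. apply Hpos. lra. }
  split; [exact Hdec|]. split; [exact Hinc|]. split.
  - intros z Hz. destruct (Rtotal_order z m) as [Hlt|[->|Hgt]].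
    + left. apply Hdec; lra.
    + lra.
    + left. apply Hinc; lra.
  - intros z Hz. split.
    + intros Hd0. pose proof (uniqueness_limite _ _ _ _ Hd0 (Hd z Hz)) as E.
      destruct (Rtotal_order z m) as [Hlt|[->|Hgt]]; [| reflexivity |].
      * pose proof (Hneg z ltac:(lra)). lra.
      * pose proof (Hpos z ltac:(lra)). lra.
    + intros ->. rewrite <- Hzero. apply Hd. lra.
Qed.

(* Part (i) for real parameters with (a-1)(b-1) > 4: the critical point zm is
   where S(zm) = 1/((a-1)(b-1)), and g' has the sign of S(zm) - S(z). *)
Lemma gz_valley a b : 4 < (a - 1) * (b - 1) ->
  exists zm : R, (0 < zm /\ zm < 1) /\
     (forall x y, 0 < x -> x < y -> y <= zm -> gz y a b < gz x a b) /\
     (forall x y, zm <= x -> x < y -> y < 1 -> gz x a b < gz y a b) /\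
     (forall z, (0 < z /\ z < 1) -> gz zm a b <= gz z a b) /\
     (forall z, (0 < z /\ z < 1) ->
        (derivable_pt_lim (fun t => gz t a b) z 0 <-> z = zm)).
Proof.
  intros HK. set (K := (a - 1) * (b - 1)) in *.
  assert (HK1 : 0 < 1/K < 1/4).
  { split; [apply Rdiv_lt_0_compat; lra|].
    apply Rmult_lt_reg_r with K; [lra|]. unfold Rdiv. rewrite Rmult_assoc, Rinv_l; lra. }
  destruct (Sz_attains (1/K) HK1) as [zm [Hzm HS]].
  assert (Hsign : forall z, 0 < z < 1 ->
            (1 - K * Sz z) / (1 - z)^2 = K * (Sz zm - Sz z) / (1 - z)^2).
  { intros z Hz. rewrite HS. field. lra. }
  exists zm. split; [exact Hzm|].
  apply (valley_of_derivative_sign (fun t => gz t a b)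
           (fun z => (1 - K * Sz z) / (1 - z)^2));
    [exact Hzm | apply gz_derive | | | ].
  - intros z Hz. rewrite Hsign by lra. pose proof (Sz_decreasing z zm ltac:(lra) ltac:(lra) ltac:(lra)).
    apply Rdiv_neg_pos; [nra | apply pow_lt; lra].
  - rewrite Hsign by lra. lra.
  - intros z Hz. rewrite Hsign by lra. pose proof (Sz_decreasing zm z ltac:(lra) ltac:(lra) ltac:(lra)).
    apply Rdiv_lt_0_compat; [nra | apply pow_lt; lra].
Qed.

Lemma valley_two_roots (h : R -> R) l u m p q : l < m < u ->
  (forall z, l < z < u -> continuity_pt h z) ->
  (forall x y, l < x -> x < y -> y <= m -> h y < h x) ->
  (forall x y, m <= x -> x < y -> y < u -> h x < h y) ->
  (forall z, l < z < u -> h m <= h z) ->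
  l < p -> q < u ->
  (forall z, l < z <= p -> h z > 0) -> (forall z, q <= z < u -> h z > 0) ->
  (exists z, l < z < u /\ h z < 0) ->
  exists z1 z2, l < z1 /\ z1 < z2 /\ z2 < u /\ h z1 = 0 /\ h z2 = 0 /\
    (forall z, l < z < u -> h z = 0 -> z = z1 \/ z = z2) /\ p < z1 /\ z2 < q.
Proof.
  intros Hm Hc Hdec Hinc Hmin Hp Hq Hleft Hright [z0 [Hz0 Hneg]].
  assert (Hhm : h m < 0) by (pose proof (Hmin z0 Hz0); lra).
  assert (Hpm : p < m).
  { destruct (Rlt_le_dec p m) as [H|H]; [exact H|]. pose proof (Hleft m ltac:(lra)). lra. }
  assert (Hmq : m < q).
  { destruct (Rlt_le_dec m q) as [H|H]; [exact H|]. pose proof (Hright m ltac:(lra)). lra. }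
  pose proof (Hleft p ltac:(lra)) as Hhp. pose proof (Hright q ltac:(lra)) as Hhq.
  destruct (Ranalysis5.IVT_interv (fun t => - h t) p m) as [z1 [Hz1 E1]].
  { intros t Ht. apply continuity_pt_opp, Hc. lra. }
  { lra. } { lra. } { lra. }
  destruct (Ranalysis5.IVT_interv h m q) as [z2 [Hz2 E2]].
  { intros t Ht. apply Hc. lra. }
  { lra. } { lra. } { lra. }
  simpl in E1, E2.
  (* The roots are interior: h is nonzero at p, m and q. *)
  assert (z1 <> p /\ z1 <> m) by (split; intros ->; lra).
  assert (z2 <> m /\ z2 <> q) by (split; intros ->; lra).
  exists z1, z2. repeat split; try lra.
  intros z Hz Ez. destruct (Rle_lt_dec z m) as [Hzm|Hzm].
  - left. destruct (Rtotal_order z z1) as [Hlt|[Heq|Hgt]]; [| exact Heq |].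
    + pose proof (Hdec z z1 ltac:(lra) Hlt ltac:(lra)). lra.
    + pose proof (Hdec z1 z ltac:(lra) Hgt Hzm). lra.
  - right. destruct (Rtotal_order z z2) as [Hlt|[Heq|Hgt]]; [| exact Heq |].
    + pose proof (Hinc z z2 ltac:(lra) Hlt ltac:(lra)). lra.
    + pose proof (Hinc z2 z ltac:(lra) Hgt ltac:(lra)). lra.
Qed.

Lemma upward_closed_threshold (P : nat -> Prop) :
  (forall n, P n -> P (S n)) -> (exists n, P n) ->
  exists m, P m /\ (forall n, (n < m)%nat -> ~ P n) /\ (forall n, (m <= n)%nat -> P n).
Proof.
  intros Hup Hex.
  destruct (dec_inh_nat_subset_has_unique_least_element P (fun n => classic (P n)) Hex)
    as [m [[Pm Hleast] _]].
  exists m. split; [exact Pm|]. split.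
  - intros n Hn Pn. specialize (Hleast n Pn). lia.
  - intros n Hn. induction Hn; auto.
Qed.

Lemma gz_threshold (a : nat) : (2 <= a)%nat ->
  (exists z, 0 < z < 1 /\ (INR a - 1) * fz z < 1) ->
  exists b' : nat, (a + 1 <= b')%nat /\
     (forall b0 : nat, (a < b0)%nat -> (b0 < b')%nat ->
        forall z, (0 < z /\ z < 1) -> gz z (INR a) (INR b0) >= 0) /\
     (forall b0 : nat, (b' <= b0)%nat ->
        exists z, (0 < z /\ z < 1) /\ gz z (INR a) (INR b0) < 0).
Proof.
  intros Ha [zs [Hzs Hslope]].
  assert (Ha2 : 2 <= INR a) by (apply le_INR in Ha; simpl in Ha; lra).
  set (Neg := fun n => (a < n)%nat /\ exists z, 0 < z < 1 /\ gz z (INR a) (INR n) < 0).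
  assert (Hup : forall n, Neg n -> Neg (S n)).
  { intros n [Hn [z [Hz Hg]]]. split; [lia|]. exists z. split; [exact Hz|].
    rewrite S_INR. apply gz_neg_persists; [| exact Hz | exact Hg].
    apply lt_INR in Hn. lra. }
  assert (Hex : exists n, Neg n).
  { destruct (gz_eventually_negative zs (INR a) Hzs Hslope) as [n [Hn Hg]].
    exists n. split; [apply INR_lt; exact Hn | now exists zs]. }
  destruct (upward_closed_threshold Neg Hup Hex) as [m [[Hm _] [Hbelow Habove]]].
  exists m. split; [lia|]. split.
  - intros b0 Hab0 Hb0m z Hz. apply Rnot_lt_ge. intros Hg.
    apply (Hbelow b0 Hb0m). split; [exact Hab0 | now exists z].
  - intros b0 Hb0. exact (proj2 (Habove b0 Hb0)).
Qed.

Theorem lemma2 (a b : nat) (zl zr : R) :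
  (3 <= a)%nat -> (a < b)%nat ->
  (0 < zl /\ zl < 1) -> fz zl = 1 / (INR a - 1) ->
  (0 < zr /\ zr < 1) -> fz zr = 1 / (INR b - 1) ->
  (* (i) *)
  (exists zm : R, (0 < zm /\ zm < 1) /\
     (forall x y, 0 < x -> x < y -> y <= zm ->
        gz y (INR a) (INR b) < gz x (INR a) (INR b)) /\
     (forall x y, zm <= x -> x < y -> y < 1 ->
        gz x (INR a) (INR b) < gz y (INR a) (INR b)) /\
     (forall z, (0 < z /\ z < 1) -> gz zm (INR a) (INR b) <= gz z (INR a) (INR b)) /\
     (forall z, (0 < z /\ z < 1) ->
        (derivable_pt_lim (fun t => gz t (INR a) (INR b)) z 0 <-> z = zm))) /\
  (* (ii) *)
  (forall z, (0 < z /\ z <= zl) -> gz z (INR a) (INR b) > 0) /\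
  (* (iii) *)
  (forall z, (zr <= z /\ z < 1) -> gz z (INR a) (INR b) > 0) /\
  (* (iv) *)
  ((exists z, (0 < z /\ z < 1) /\ gz z (INR a) (INR b) < 0) ->
     exists z1 z2, 0 < z1 /\ z1 < z2 /\ z2 < 1 /\
       gz z1 (INR a) (INR b) = 0 /\ gz z2 (INR a) (INR b) = 0 /\
       (forall z, (0 < z /\ z < 1) -> gz z (INR a) (INR b) = 0 -> z = z1 \/ z = z2) /\
       zl < z1 /\ z2 < zr) /\
  (* (v) *)
  (forall z, (zl < z /\ z < 1) -> gz z (INR a) (INR b) > gz z (INR a) (INR (b + 1))) /\
  (* (vi) *)
  (exists b' : nat, (a + 1 <= b')%nat /\
     (forall b0 : nat, (a < b0)%nat -> (b0 < b')%nat ->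
        forall z, (0 < z /\ z < 1) -> gz z (INR a) (INR b0) >= 0) /\
     (forall b0 : nat, (b' <= b0)%nat ->
        exists z, (0 < z /\ z < 1) /\ gz z (INR a) (INR b0) < 0)).
Proof.
  intros Ha Hab Hzl Hfl Hzr Hfr.
  assert (Ha3 : 3 <= INR a) by (apply le_INR in Ha; simpl in Ha; lra).
  assert (Hab' : INR a < INR b) by (apply lt_INR; exact Hab).
  assert (Hfl1 : fz zl * (INR a - 1) = 1) by (rewrite Hfl; field; lra).
  assert (Hfr1 : fz zr * (INR b - 1) = 1) by (rewrite Hfr; field; lra).
  assert (Hii : forall z, 0 < z <= zl -> gz z (INR a) (INR b) > 0).
  { intros z Hz. apply gz_pos_left; [lra | lra |].
    pose proof (fz_nonincreasing z zl ltac:(lra) ltac:(lra) ltac:(lra)). nra. }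
  assert (Hiii : forall z, zr <= z < 1 -> gz z (INR a) (INR b) > 0).
  { intros z Hz. apply gz_pos_right; [lra | lra |].
    pose proof (fz_nonincreasing zr z ltac:(lra) ltac:(lra) ltac:(lra)). nra. }
  assert (Hslope : forall z, zl < z < 1 -> (INR a - 1) * fz z < 1).
  { intros z Hz. pose proof (fz_decreasing zl z ltac:(lra) ltac:(lra) ltac:(lra)). nra. }
  destruct (gz_valley (INR a) (INR b) ltac:(nra)) as [zm [Hzm [Hdec [Hinc [Hmin Hcrit]]]]].
  split; [exists zm; auto|]. split; [exact Hii|]. split; [exact Hiii|]. split.
  - exact (valley_two_roots _ 0 1 zm zl zr Hzm (gz_continuous _ _) Hdec Hinc Hmin
             (proj1 Hzl) (proj2 Hzr) Hii Hiii).
  - split.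
    + intros z Hz. rewrite plus_INR, gz_step_b. simpl. pose proof (Hslope z Hz). lra.
    + apply gz_threshold; [lia|]. exists ((zl + 1) / 2). split; [lra|]. apply Hslope. lra.
Qed.
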